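(* Let $f:\mathbb{R}^2\to\mathbb{R}^2$ be a Topologically Anosov homeomorphism and $z_0\in\mathrm{Fix}(f)$. If $\Omega(f)=\{z_0\}$, then there exists $x\in\mathbb{R}^2$ with $\alpha(x)=\emptyset$ or $\omega(x)=\emptyset$.
   Context: A homeomorphism $f:\mathbb{R}^2\to\mathbb{R}^2$ is Topologically Anosov (TA) if: (i) there is a continuous strictly positive $\epsilon:\mathbb{R}^2\to\mathbb{R}$ such that for all $x\neq y$ there is $k\in\mathbb{Z}$ with $\|f^k(x)-f^k(y)\|>\epsilon(f^k(x))$; and (ii) for every continuous strictly positive $\epsilon$ there is a continuous strictly positive $\delta$ such that every $\delta$-pseudo-orbit is $\epsilon$-shadowed by an orbit. A $\delta$-pseudo-orbit is a sequence $(x_n)_{n\in\mathbb{Z}}$ with $\|f(x_n)-x_{n+1}\|<\delta(f(x_n))$; it is $\epsilon$-shadowed by the orbit of $x$ if $\|x_n-f^n(x)\|<\epsilon(x_n)$ for all $n$. $\Omega(f)$ is the nonwandering set; $\alpha(x),\omega(x)$ are the $\alpha$- and $\omega$-limit sets. *)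

From Stdlib Require Import Reals ZArith Lra.
Open Scope R_scope.

Definition pt : Type := (R * R)%type.

Definition dist (p q : pt) : R :=
  sqrt ((fst p - fst q) ^ 2 + (snd p - snd q) ^ 2).

Definition continuous_map (f : pt -> pt) : Prop :=
  forall x e, 0 < e -> exists d, 0 < d /\
    forall y, dist x y < d -> dist (f x) (f y) < e.

Definition continuous_fun (h : pt -> R) : Prop :=
  forall x e, 0 < e -> exists d, 0 < d /\
    forall y, dist x y < d -> Rabs (h x - h y) < e.

Definition pos_cont (h : pt -> R) : Prop :=
  continuous_fun h /\ forall x, 0 < h x.

Definition homeo (f g : pt -> pt) : Prop :=
  continuous_map f /\ continuous_map g /\
  (forall x, g (f x) = x) /\ (forall x, f (g x) = x).

Definition iterz (f g : pt -> pt) (k : Z) (x : pt) : pt :=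
  match k with
  | Z0 => x
  | Zpos p => Nat.iter (Pos.to_nat p) f x
  | Zneg p => Nat.iter (Pos.to_nat p) g x
  end.

Definition expansive_TA (f g : pt -> pt) : Prop :=
  exists eps : pt -> R, pos_cont eps /\
    forall x y, x <> y -> exists k : Z,
      dist (iterz f g k x) (iterz f g k y) > eps (iterz f g k x).

Definition pseudo_orbit (f : pt -> pt) (delta : pt -> R) (xs : Z -> pt) : Prop :=
  forall n : Z, dist (f (xs n)) (xs (n + 1)%Z) < delta (f (xs n)).

Definition shadowed (f g : pt -> pt) (eps : pt -> R) (xs : Z -> pt) (x : pt) : Prop :=
  forall n : Z, dist (xs n) (iterz f g n x) < eps (xs n).

Definition shadowing_TA (f g : pt -> pt) : Prop :=
  forall eps : pt -> R, pos_cont eps ->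
    exists delta : pt -> R, pos_cont delta /\
      forall xs : Z -> pt, pseudo_orbit f delta xs ->
        exists x, shadowed f g eps xs x.

Definition TA (f g : pt -> pt) : Prop :=
  homeo f g /\ expansive_TA f g /\ shadowing_TA f g.

(* nonwandering: every neighbourhood U of x meets f^n(U) for some n >= 1 *)
Definition nonwandering (f : pt -> pt) (x : pt) : Prop :=
  forall r, 0 < r -> exists (n : nat) (y : pt),
    (1 <= n)%nat /\ dist x y < r /\ dist x (Nat.iter n f y) < r.

Definition omega_limit (f : pt -> pt) (x y : pt) : Prop :=
  forall r, 0 < r -> forall N : nat, exists n : nat,
    (N <= n)%nat /\ dist (Nat.iter n f x) y < r.

Definition alpha_limit (g : pt -> pt) (x y : pt) : Prop := omega_limit g x y.

(** Limit points are nonwandering, so if some [x <> z0] had nonempty α- and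
    ω-limit sets, both would be [{z0}].  Following the orbit of [x] forward
    until it comes close to [z0] and then jumping to a backward iterate of [x]
    close to [z0] gives a periodic pseudo-orbit through [x]; an orbit
    shadowing it returns close to [x], so [x] is nonwandering, i.e. [x = z0]. *)

From Stdlib Require Import Reals ZArith Lra Lia Classical.
(* Imported after [Reals], whose [Rtopology] also exports a [dist]. *)
Open Scope R_scope.

Lemma dist_euc_eq p q : dist p q = dist_euc (fst p) (snd p) (fst q) (snd q).
Proof. unfold dist, dist_euc, Rsqr. f_equal. ring. Qed.

Lemma dist_xx p : dist p p = 0.
Proof. rewrite dist_euc_eq. apply distance_refl. Qed.

Lemma dist_comm p q : dist p q = dist q p.
Proof. rewrite !dist_euc_eq. apply distance_symm. Qed.

Lemma dist_triangle p q r : dist p r <= dist p q + dist q r.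
Proof. rewrite !dist_euc_eq. apply triangle. Qed.

Lemma pos_cont_const r : 0 < r -> pos_cont (fun _ => r).
Proof.
  intros Hr. split; [|intros; exact Hr].
  intros x e He. exists 1. split; [lra|].
  intros y _. rewrite Rminus_diag, Rabs_R0. exact He.
Qed.

Lemma omega_limit_nonwandering (h : pt -> pt) x z :
  omega_limit h x z -> nonwandering h z.
Proof.
  intros Hz r Hr.
  destruct (Hz r Hr 0%nat) as [n [_ Hn]].
  destruct (Hz r Hr (S n)) as [n' [Hnn' Hn']].
  exists (n' - n)%nat, (Nat.iter n h x). split; [lia|]. split.
  - rewrite dist_comm. exact Hn.
  - rewrite <- Nat.iter_add, Nat.sub_add by lia.
    rewrite dist_comm. exact Hn'.
Qed.

Lemma iterz_of_nat f g n x : iterz f g (Z.of_nat n) x = Nat.iter n f x.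
Proof.
  destruct n as [|n]; [reflexivity|].
  simpl. rewrite SuccNat2Pos.id_succ. reflexivity.
Qed.

Lemma iterz_opp_of_nat f g n x : iterz f g (- Z.of_nat n) x = Nat.iter n g x.
Proof.
  destruct n as [|n]; [reflexivity|].
  simpl. rewrite SuccNat2Pos.id_succ. reflexivity.
Qed.

Section Inverse.

Variables f g : pt -> pt.
Hypothesis f_g : forall x, f (g x) = x.

Lemma iterz_succ k x : f (iterz f g k x) = iterz f g (k + 1) x.
Proof.
  destruct (Z_le_gt_dec 0 k) as [Hk | Hk].
  - pose proof (Z2Nat.id k Hk) as Ek. set (n := Z.to_nat k) in Ek.
    replace (k + 1)%Z with (Z.of_nat (S n)) by lia.
    rewrite <- Ek, !iterz_of_nat. reflexivity.
  - pose proof (Z2Nat.id (- k - 1)) as Ek. set (n := Z.to_nat (- k - 1)) in Ek.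
    replace (k + 1)%Z with (- Z.of_nat n)%Z by lia.
    replace k with (- Z.of_nat (S n))%Z by lia.
    rewrite !iterz_opp_of_nat, Nat.iter_succ, f_g. reflexivity.
Qed.

Lemma iter_f_iter_g n x : Nat.iter n f (Nat.iter n g x) = x.
Proof.
  induction n as [|n IH]; [reflexivity|].
  rewrite Nat.iter_succ_r, Nat.iter_succ, f_g. exact IH.
Qed.

Lemma alpha_limit_nonwandering x z : alpha_limit g x z -> nonwandering f z.
Proof.
  intros Hz r Hr.
  destruct (Hz r Hr 0%nat) as [n [_ Hn]].
  destruct (Hz r Hr (S n)) as [n' [Hnn' Hn']].
  exists (n' - n)%nat, (Nat.iter n' g x). split; [lia|]. split.
  - rewrite dist_comm. exact Hn'.
  - assert (Hsplit : Nat.iter n' g x = Nat.iter (n' - n) g (Nat.iter n g x)).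
    { rewrite <- Nat.iter_add, Nat.sub_add by lia. reflexivity. }
    rewrite Hsplit, iter_f_iter_g, dist_comm. exact Hn.
Qed.

(* The orbit of [x] up to time [n - 1], continued by the orbit of [x] from
   time [- m] on: a pseudo-orbit through [x] of period [n + m] whose only
   jump goes from [f^n x] to [g^m x]. *)
Definition glued_orbit x n m : Z -> pt := fun k =>
  if (k <? Z.of_nat n)%Z then iterz f g k x
  else iterz f g (k - Z.of_nat (n + m)) x.

Lemma glued_orbit_pseudo_orbit delta x n m :
  (forall p, 0 < delta p) ->
  dist (Nat.iter n f x) (Nat.iter m g x) < delta (Nat.iter n f x) ->
  pseudo_orbit f delta (glued_orbit x n m).
Proof.
  intros Hdelta Hjump k. unfold glued_orbit.
  destruct (Z.ltb_spec k (Z.of_nat n)), (Z.ltb_spec (k + 1) (Z.of_nat n));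
    try lia; rewrite iterz_succ.
  - rewrite dist_xx. apply Hdelta.
  - replace (k + 1 - Z.of_nat (n + m))%Z with (- Z.of_nat m)%Z by lia.
    replace (k + 1)%Z with (Z.of_nat n) by lia.
    rewrite iterz_of_nat, iterz_opp_of_nat. exact Hjump.
  - replace (k - Z.of_nat (n + m) + 1)%Z with (k + 1 - Z.of_nat (n + m))%Z by lia.
    rewrite dist_xx. apply Hdelta.
Qed.

End Inverse.

Lemma common_limit_small_jump f g delta x z :
  pos_cont delta -> omega_limit f x z -> alpha_limit g x z ->
  exists n m, (1 <= n)%nat /\
    dist (Nat.iter n f x) (Nat.iter m g x) < delta (Nat.iter n f x).
Proof.
  intros [Hcont Hpos] Homega Halpha.
  pose proof (Hpos z) as Hz.
  destruct (Hcont z (delta z / 2)) as [d [Hd Hclose]]; [lra|].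
  set (rho := Rmin d (delta z / 4)).
  assert (Hrho_d : rho <= d) by apply Rmin_l.
  assert (Hrho_delta : rho <= delta z / 4) by apply Rmin_r.
  assert (Hrho : 0 < rho) by (apply Rmin_glb_lt; lra).
  destruct (Homega rho Hrho 1%nat) as [n [Hn Hfn]].
  destruct (Halpha rho Hrho 0%nat) as [m [_ Hgm]].
  exists n, m. split; [exact Hn|].
  set (a := Nat.iter n f x) in *. set (b := Nat.iter m g x) in *.
  assert (Hab : dist a b < delta z / 2).
  { pose proof (dist_triangle a z b) as Htri. rewrite (dist_comm z b) in Htri. lra. }
  assert (Hda : Rabs (delta z - delta a) < delta z / 2).
  { apply Hclose. rewrite dist_comm. lra. }
  apply Rabs_def2 in Hda. lra.
Qed.

Lemma shadowing_common_limit_nonwandering f g x z :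
  (forall x, f (g x) = x) -> shadowing_TA f g ->
  omega_limit f x z -> alpha_limit g x z -> nonwandering f x.
Proof.
  intros f_g Hshadow Homega Halpha r Hr.
  destruct (Hshadow _ (pos_cont_const r Hr)) as [delta [Hdelta Hpseudo]].
  destruct (common_limit_small_jump f g delta x z Hdelta Homega Halpha)
    as [n [m [Hn Hjump]]].
  destruct (Hpseudo (glued_orbit f g x n m)) as [y Hy].
  { exact (glued_orbit_pseudo_orbit f g f_g delta x n m (proj2 Hdelta) Hjump). }
  exists (n + m)%nat, y. split; [lia|].
  pose proof (Hy 0%Z) as Hy0. pose proof (Hy (Z.of_nat (n + m))) as Hyp.
  unfold glued_orbit in Hy0, Hyp.
  rewrite (proj2 (Z.ltb_lt 0 _)) in Hy0 by lia.
  rewrite (proj2 (Z.ltb_ge _ _)), Z.sub_diag, iterz_of_nat in Hyp by lia.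
  split; [exact Hy0 | exact Hyp].
Qed.

Theorem mainTheorem13 (f g : pt -> pt) (z0 : pt) :
  TA f g ->
  f z0 = z0 ->
  (forall x, nonwandering f x <-> x = z0) ->
  exists x : pt, (forall y, ~ alpha_limit g x y) \/ (forall y, ~ omega_limit f x y).
Proof.
  intros [[_ [_ [_ f_g]]] [_ Hshadow]] _ Hnw.
  set (x := (fst z0 + 1, snd z0)).
  exists x. apply NNPP. intros Hlimits.
  apply not_or_and in Hlimits as [Halpha Homega].
  apply not_all_not_ex in Halpha as [ya Hya].
  apply not_all_not_ex in Homega as [yo Hyo].
  assert (ya = z0) by exact (proj1 (Hnw ya) (alpha_limit_nonwandering f g f_g x ya Hya)).
  assert (yo = z0) by exact (proj1 (Hnw yo) (omega_limit_nonwandering f x yo Hyo)).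
  subst ya yo.
  assert (Hx : x = z0).
  { apply Hnw.
    exact (shadowing_common_limit_nonwandering f g x z0 f_g Hshadow Hyo Hya). }
  assert (Hfst : fst x = fst z0) by now rewrite Hx.
  simpl in Hfst. lra.
Qed.
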